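(* Let $0<p<1$, let $\mathcal{X}=\{\frac1n,\frac2n,\ldots,\frac nn\}$, and let $\mathcal{H}_{EP;p}$ be the equal-piece classifier class described in the context. For any $\alpha,\epsilon\in(0,1)$ with $\epsilon<24/p$ and $\frac{2}{|\mathcal{X}|}<\alpha<\frac{p^2\epsilon}{24}$, the class $\mathcal{H}_{EP;p}$ is $(\alpha,\epsilon)$-separable.
   Context: Each hypothesis $h\in\mathcal{H}_{EP;p}$ is determined by parameters $a^h_1,\ldots,a^h_k$ with $a^h_1+p<a^h_2,\ \ldots,\ a^h_{k-1}+p<a^h_k,\ a^h_k+p<1$, defining intervals $[a^h_1,a^h_1+p],\ldots,[a^h_k,a^h_k+p]$; for $x\in\mathcal{X}$, $h(x)=1$ iff $x\in[a^h_i,a^h_i+p]$ for some $1\le i\le k$. For a class $\mathcal{H}$ over finite domain $\mathcal{X}$, the hypotheses graph is bipartite with parts $\mathcal{H}$ and $\mathcal{X}$, $h$ adjacent to $x$ iff $h(x)=1$. For $S\subseteq\mathcal{X}$, $T\subseteq\mathcal{H}$, $d(S,T)=\frac{e(S,T)}{|S||T|}$ with $e(S,T)$ the number of edges between $S$ and $T$. Hypotheses $h_1,h_2$ are $\epsilon$-close if $|\{x\in\mathcal{X}: h_1(x)\ne h_2(x)\}|\le\epsilon|\mathcal{X}|$; $B_h(\epsilon)$ is the set of hypotheses $\epsilon$-close to $h$. $T\subseteq\mathcal{H}$ is $(\alpha,\epsilon)$-tight if some $h$ has $|T\cap B_h(\epsilon)|\ge\alpha|T|$. $\mathcal{H}$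 is $(\alpha,\epsilon)$-separable if for every $T\subseteq\mathcal{H}$ that is not $(\alpha,\epsilon)$-tight there exist $S\subseteq\mathcal{X}$ and disjoint $T_0,T_1\subseteq T$ with $|S|\ge\alpha|\mathcal{X}|$, $|T_0|,|T_1|\ge\alpha|T|$ and $|d(S,T_0)-d(S,T_1)|\ge\alpha$. *)

From HB Require Import structures.
From mathcomp Require Import all_boot all_order all_algebra.
From mathcomp Require Import reals.
Set Implicit Arguments. Unset Strict Implicit. Unset Printing Implicit Defensive.
Import Order.TTheory GRing.Theory Num.Theory.
Local Open Scope ring_scope.

Section Defs.
Variable R : realType.

Definition pt (n : nat) (i : 'I_n) : R := (i.+1)%:R / n%:R.

Definition hyp (n : nat) := {ffun 'I_n -> bool}.

(* Admissible parameters a_1 < ... < a_k (0-indexed as a 0, ..., a (k-1)):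
   k >= 1, 0 <= a_1, a_i + p < a_(i+1), a_k + p < 1. *)
Definition EP_params (p : R) (k : nat) (a : nat -> R) : Prop :=
  [/\ (0 < k)%N, 0 <= a 0%N,
      (forall i : nat, (i.+1 < k)%N -> a i + p < a i.+1)
    & a k.-1 + p < 1].

Definition in_EP (n : nat) (p : R) (h : hyp n) : Prop :=
  exists (k : nat) (a : nat -> R), EP_params p k a /\
    forall x : 'I_n,
      h x = [exists i : 'I_k, (a i <= pt x) && (pt x <= a i + p)].

Definition eclose (n : nat) (eps : R) (h1 h2 : hyp n) : bool :=
  #|[set x : 'I_n | h1 x != h2 x]|%:R <= eps * n%:R.

Definition edges (n : nat) (S : {set 'I_n}) (T : {set hyp n}) : nat :=
  #|[set xh : 'I_n * hyp n | [&& xh.1 \in S, xh.2 \in T & xh.2 xh.1]]|.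

Definition dens (n : nat) (S : {set 'I_n}) (T : {set hyp n}) : R :=
  (edges S T)%:R / (#|S| * #|T|)%:R.

Definition tight (n : nat) (p alpha eps : R) (T : {set hyp n}) : Prop :=
  exists h : hyp n, in_EP p h /\
    alpha * #|T|%:R <= #|[set g in T | eclose eps h g]|%:R.

Definition separable (n : nat) (p alpha eps : R) : Prop :=
  forall T : {set hyp n},
    (forall h, h \in T -> in_EP p h) ->
    ~ tight p alpha eps T ->
    exists (S : {set 'I_n}) (T0 T1 : {set hyp n}),
      [/\ T0 \subset T, T1 \subset T & [disjoint T0 & T1]] /\
      [/\ alpha * n%:R <= #|S|%:R,
          alpha * #|T|%:R <= #|T0|%:R,
          alpha * #|T|%:R <= #|T1|%:R
        & alpha <= `|dens S T0 - dens S T1|].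

End Defs.

(* Cut X into consecutive blocks of m = floor(alpha n) + 1 > alpha n points.  If on
   some block at least alpha |T| hypotheses of T are identically 1 and at least
   alpha |T| are identically 0, that block and these two families separate T: their
   densities are 1 and 0.  Otherwise label every block by the value that fewer than
   alpha |T| hypotheses avoid entirely, and let h be this block-constant labelling.
   A hypothesis g differs from h only on the last, partial block, on the blocks where
   g avoids the label, and on the blocks containing a switch of g.  A union of
   k < 1/p intervals switches at most 2k < 2/p times, and every block is avoided by
   fewer than alpha |T| hypotheses, so the average distance from T to h is below
   eps n / 4.  By Markov more than half of T lies within eps n / 2 of h, hence
   pairwise within eps n, and T is tight. *)

From HB Require Import structures.
From mathcomp Require Import all_boot all_order all_algebra.
From mathcomp Require Import reals.
From mathcomp Require Import lra.
Set Implicit Arguments. Unset Strict Implicit. Unset Printing Implicit Defensive.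
Import Order.TTheory GRing.Theory Num.Theory.

Lemma card_le_of_rel (T1 T2 : finType) (A : {set T1}) (C : {set T2})
    (P : T1 -> T2 -> bool) :
  (forall x, x \in A -> exists2 y, y \in C & P x y) ->
  (forall x x' y, x \in A -> x' \in A -> P x y -> P x' y -> x = x') ->
  #|A| <= #|C|.
Proof.
move=> exP uniqP; have [->|/set0Pn [x0 Ax0]] := eqVneq A set0; first by rewrite cards0.
have [y0 _ _] := exP x0 Ax0.
pose f x := odflt y0 [pick y in C | P x y].
have fP x : x \in A -> (f x \in C) && P x (f x).
  by case/exP=> y Cy Pxy; rewrite /f; case: pickP => [z //|/(_ y)]; rewrite Cy Pxy.
rewrite -(card_in_imset (f := f)); last first.
  by move=> x x' Ax Ax' fxx'; apply: (uniqP _ _ (f x) Ax Ax');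
    [case/andP: (fP x Ax) | rewrite fxx'; case/andP: (fP x' Ax')].
by apply/subset_leq_card/subsetP => _ /imsetP [x Ax ->]; case/andP: (fP x Ax).
Qed.

Lemma double_count_card (I J : finType) (A : {set I}) (Q : I -> {set J}) :
  \sum_(i in A) #|Q i| = \sum_j #|[set i in A | j \in Q i]|.
Proof.
under eq_bigr do rewrite -sum1_card big_mkcond /=.
rewrite exchange_big /=; apply: eq_bigr => j _.
by rewrite -sum1dep_card big_mkcondr.
Qed.

Definition switches N (s : nat -> bool) : {set 'I_N} := [set x : 'I_N | s x != s x.+1].

Lemma exists_switch_between (s : nat -> bool) y z :
  y <= z -> s y != s z -> exists2 w, y <= w < z & s w != s w.+1.
Proof.
elim: z => [|z IH]; first by rewrite leqn0 => /eqP ->; rewrite eqxx.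
rewrite leq_eqVlt => /orP [/eqP ->|]; first by rewrite eqxx.
rewrite ltnS => le_yz s_yz1.
have [s_zz1|s_zz1] := eqVneq (s z) (s z.+1); last by exists z; rewrite ?le_yz ?ltnSn.
have s_yz : s y != s z by rewrite s_zz1.
have [w /andP [le_yw lt_wz] s_ww1] := IH le_yz s_yz.
by exists w; rewrite // le_yw ltnW.
Qed.

Definition convex_seq (s : nat -> bool) :=
  forall i j l, i <= j <= l -> s i -> s l -> s j.

Lemma convex_seq_switch_from_uniq s b x y : convex_seq s ->
  s x = b -> s x.+1 = ~~ b -> s y = b -> s y.+1 = ~~ b -> x = y.
Proof.
move=> cvx; wlog lt_xy : x y / x < y.
  move=> W sx sx1 sy sy1; case: (ltngtP x y) => [lt_xy|lt_yx|//].
    exact: W.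
  by apply/esym/W.
case: b => sx sx1 sy sy1.
  by have := cvx x x.+1 y; rewrite leqnSn lt_xy sx sy sx1 => /(_ isT isT isT).
by have := cvx x.+1 y y.+1; rewrite lt_xy leqnSn sx1 sy1 sy => /(_ isT isT isT).
Qed.

Lemma card_switches_from_union_convex N k (s : 'I_k -> nat -> bool) b :
  (forall i, convex_seq (s i)) ->
  #|[set x : 'I_N | ([exists i, s i x] == b) && ([exists i, s i x.+1] == ~~ b)]| <= k.
Proof.
move=> s_convex; rewrite -[k in _ <= k]card_ord -cardsT.
apply: (card_le_of_rel (P := fun (x : 'I_N) i => (s i x == b) && (s i x.+1 == ~~ b))).
  move=> x; rewrite inE => /andP [/eqP ux /eqP ux1].
  have [i si si1] : exists2 i, s i x = b & s i x.+1 = ~~ b.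
    case: b ux ux1 => [/existsP [i si] /negbT/existsPn/(_ i)/negbTE si1
                      |/negbT/existsPn ux /existsP [i si1]].
      by exists i.
    by exists i; rewrite // (negbTE (ux i)).
  by exists i; rewrite ?inE ?si ?si1 ?eqxx.
move=> x x' i _ _ /andP [/eqP sx /eqP sx1] /andP [/eqP sx' /eqP sx'1].
by apply: val_inj; exact: (convex_seq_switch_from_uniq (s_convex i) sx sx1 sx' sx'1).
Qed.

Lemma card_switches_union_convex N k (s : 'I_k -> nat -> bool) :
  (forall i, convex_seq (s i)) -> #|switches N (fun j => [exists i, s i j])| <= k.*2.
Proof.
move=> s_convex; set u := fun j => [exists i, s i j].
have sub : switches N u \subset
    [set x : 'I_N | (u x == true) && (u x.+1 == ~~ true)] :|:
    [set x : 'I_N | (u x == false) && (u x.+1 == ~~ false)].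
  by apply/subsetP => x; rewrite !inE; case: (u x); case: (u x.+1).
rewrite -addnn; apply: leq_trans (subset_leq_card sub) _.
apply: leq_trans (leq_card_setU _ _).1 _.
by rewrite leq_add ?card_switches_from_union_convex.
Qed.

(* [inord j] is [0] for [j > N]; [hyp_at g] is only ever read on [0 <= j <= N]. *)
Definition hyp_at N (g : hyp N.+1) (j : nat) : bool := g (inord j).

Definition hdist n (g h : hyp n) : nat := #|[set x | g x != h x]|.

Lemma hdistC n (g h : hyp n) : hdist g h = hdist h g.
Proof. by apply: eq_card => x; rewrite !inE eq_sym. Qed.

Lemma hdist_triangle n (g1 g2 g3 : hyp n) :
  hdist g1 g3 <= hdist g1 g2 + hdist g2 g3.
Proof.
apply: leq_trans (leq_card_setU _ _).1; apply/subset_leq_card/subsetP => x.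
by rewrite !inE; case: (g1 x); case: (g2 x); case: (g3 x).
Qed.

Section Blocks.
Variables (N m : nat).
Hypothesis m_gt0 : 0 < m.
Local Notation n := N.+1.

Definition block (b : nat) : {set 'I_n} := [set x : 'I_n | x %/ m == b].

Lemma card_block_full (b : 'I_(n %/ m)) : m <= #|block b|.
Proof.
rewrite -[m in m <= _]card_ord -cardsT.
apply: (card_le_of_rel (P := fun (j : 'I_m) (x : 'I_n) => val x == b * m + j)).
  move=> j _; have lt_bmj_n : b * m + j < n.
    apply: leq_trans (leq_divM n m); apply: leq_trans (leq_mul (ltn_ord b) (leqnn m)).
    by rewrite mulSn addnC ltn_add2r.
  exists (Ordinal lt_bmj_n); rewrite ?inE /= ?eqxx //.
  by rewrite divnMDl // (divn_small (ltn_ord j)) addn0.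
by move=> j j' x _ _ /eqP -> /eqP /addnI /val_inj.
Qed.

Lemma card_blocks_le (I : finType) (J : {set I}) (f : I -> nat) :
  #|[set x : 'I_n | [exists j in J, x %/ m == f j]]| <= #|J| * m.
Proof.
rewrite -[m in _ * m]card_ord -cardsT -cardsX.
apply: (card_le_of_rel (P := fun (x : 'I_n) (jr : I * 'I_m) =>
          (x %/ m == f jr.1) && (val jr.2 == x %% m))).
  move=> x; rewrite inE => /exists_inP [j Jj xj].
  by exists (j, Ordinal (ltn_pmod x m_gt0)); rewrite ?inE /= ?Jj ?xj ?eqxx.
move=> x x' [j r] _ _ /andP [/eqP qx /eqP rx] /andP [/eqP qx' /eqP rx'].
by apply: val_inj; rewrite /= (divn_eq x m) (divn_eq x' m) qx qx' -rx -rx'.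
Qed.

Lemma nonconstant_block_switch (g : hyp n) (x y : 'I_n) :
  x %/ m = y %/ m -> g x != g y ->
  exists2 w : 'I_N, w \in switches N (hyp_at g) & x %/ m = w %/ m.
Proof.
wlog le_xy : x y / x <= y.
  move=> W xy gxy; case: (leqP x y) => [le_xy|/ltnW le_yx]; first exact: (W x y).
  by rewrite xy; apply: (W y x) => //; rewrite eq_sym.
move=> xy gxy.
have [w /andP [le_xw lt_wy] sw] : exists2 w, x <= w < y & hyp_at g w != hyp_at g w.+1.
  by apply: exists_switch_between; rewrite // /hyp_at !inord_val.
have lt_wN : w < N by apply: leq_trans lt_wy _; rewrite -ltnS.
exists (Ordinal lt_wN); first by rewrite inE.
by apply/eqP; rewrite eqn_leq leq_div2r //= xy leq_div2r // ltnW.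
Qed.

Definition block_const (c : nat -> bool) : hyp n := [ffun x : 'I_n => c (x %/ m)].

Definition minority_blocks (c : nat -> bool) (g : hyp n) : {set 'I_(n %/ m)} :=
  [set b : 'I_(n %/ m) | [forall x in block b, g x != c b]].

Lemma hdist_block_const c g :
  hdist g (block_const c) <=
    m + #|minority_blocks c g| * m + #|switches N (hyp_at g)| * m.
Proof.
pose near (I : finType) (J : {set I}) (f : I -> nat) :=
  [set x : 'I_n | [exists j in J, x %/ m == f j]].
have sub : [set x | g x != block_const c x] \subset
    near _ [set: 'I_1] (fun=> n %/ m) :|: near _ (minority_blocks c g) val :|:
    near _ (switches N (hyp_at g)) (fun w => w %/ m).
  apply/subsetP => x; rewrite !inE ffunE => gx.
  have [lt_xn|ge_xn] := ltnP (x %/ m) (n %/ m); last first.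
    have le_xn : x %/ m <= n %/ m by apply/leq_div2r/ltnW.
    apply/orP; left; apply/orP; left; apply/exists_inP.
    by exists ord0; rewrite // eqn_leq le_xn.
  pose b := Ordinal lt_xn.
  have [minb|] := boolP (b \in minority_blocks c g).
    by apply/orP; left; apply/orP; right; apply/exists_inP; exists b.
  rewrite inE negb_forall_in => /exists_inP [y]; rewrite inE negbK => /eqP yb /eqP gy.
  have gxy : g x != g y by rewrite gy.
  have [w sw xw] := nonconstant_block_switch (esym yb) gxy.
  by apply/orP; right; apply/exists_inP; exists w; rewrite // xw.
apply: leq_trans (subset_leq_card sub) _; apply: leq_trans (leq_card_setU _ _).1 _.
rewrite leq_add ?card_blocks_le //; apply: leq_trans (leq_card_setU _ _).1 _.
rewrite leq_add ?card_blocks_le //.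
by apply: leq_trans (card_blocks_le _ _) _; rewrite cardsT card_ord mul1n.
Qed.

End Blocks.

Local Open Scope ring_scope.

Section EqualPieces.
Variable R : realType.

Lemma EP_params_ge (p : R) k a :
  EP_params p k a -> forall i, (i < k)%N -> i%:R * p <= a i.
Proof.
case=> _ a0_ge0 a_incr _; elim=> [|i IH] lt_ik; first by rewrite mul0r.
have := a_incr i lt_ik; have := IH (ltnW lt_ik); rewrite -natr1; lra.
Qed.

Lemma EP_params_card (p : R) k a : EP_params p k a -> k%:R * p < 1.
Proof.
move=> HP; case: (HP) => k_gt0 _ _ last_lt1.
have lt_k : (k.-1 < k)%N by rewrite ltn_predL.
have := EP_params_ge HP lt_k.
have -> : k%:R = k.-1%:R + 1 :> R by rewrite natr1 prednK.
lra.
Qed.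

Lemma EP_card_switches (p : R) N (g : hyp N.+1) :
  0 <= p -> in_EP p g -> #|switches N (hyp_at g)|%:R * p < 2.
Proof.
move=> p_ge0 [k [a [HP g_def]]].
pose pos j : R := j.+1%:R / N.+1%:R.
have pos_le i j : (i <= j)%N -> pos i <= pos j.
  by move=> le_ij; rewrite ler_pM2r ?invr_gt0 ?ltr0n // ler_nat.
pose s (i : 'I_k) j := (a i <= pos j) && (pos j <= a i + p).
have s_convex i : convex_seq (s i).
  move=> j1 j2 j3 /andP [le12 le23] /andP [a_le _] /andP [_ le_ap].
  by rewrite /s (le_trans a_le (pos_le _ _ le12)) (le_trans (pos_le _ _ le23) le_ap).
have -> : switches N (hyp_at g) = switches N (fun j => [exists i, s i j]).
  apply/setP => x; rewrite !inE /hyp_at !g_def /pt.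
  have x_le : (x <= N)%N by apply: ltnW.
  by rewrite !inordK ?ltnS.
have := card_switches_union_convex N s_convex; rewrite -(ler_nat R) -mul2n natrM.
move=> /(ler_wpM2r p_ge0); have := EP_params_card HP; lra.
Qed.

End EqualPieces.

Section SeparationCriteria.
Variable R : realType.

Lemma markov_card (I : finType) (A : {set I}) (F : I -> R) (c : R) :
  (forall i, 0 <= F i) -> c * #|[set i in A | c < F i]|%:R <= \sum_(i in A) F i.
Proof.
move=> F_ge0; rewrite (big_setID [set i | c < F i]) /= -setIdE.
rewrite -[leLHS]addr0 lerD ?sumr_ge0 // mulr_natr -sumr_const.
by apply: ler_sum => i; rewrite inE => /andP [_ /ltW].
Qed.

Lemma EP_nonempty n (p : R) : p < 1 -> exists h : hyp n, in_EP p h.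
Proof.
move=> p_lt1; exists [ffun x => [exists i : 'I_1, (0 <= pt R x) && (pt R x <= 0 + p)]].
exists 1%N, (fun=> 0); split; last by move=> x; rewrite ffunE.
by split=> [//|//|[]//|]; rewrite add0r.
Qed.

Lemma tight_set0 n (p alpha eps : R) : p < 1 -> tight p alpha eps (set0 : {set hyp n}).
Proof.
move=> /(EP_nonempty n) [h EP_h].
by exists h; split; rewrite // cards0 mulr0.
Qed.

Definition ones n (S : {set 'I_n}) (T : {set hyp n}) :=
  [set g in T | [forall x in S, g x]].

Definition zeros n (S : {set 'I_n}) (T : {set hyp n}) :=
  [set g in T | [forall x in S, ~~ g x]].

Lemma dens_ones n (S : {set 'I_n}) (T : {set hyp n}) :
  S != set0 -> ones S T != set0 -> dens R S (ones S T) = 1.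
Proof.
move=> S_neq0 ones_neq0; rewrite /dens.
have -> : edges S (ones S T) = (#|S| * #|ones S T|)%N.
  rewrite /edges -cardsX; apply: eq_card => -[x g]; rewrite !inE /=.
  case Sx: (x \in S); case: (g \in T) => //=.
  by case: forall_inP => // /(_ x Sx) ->.
by rewrite divff // pnatr_eq0 muln_eq0 !cards_eq0 negb_or S_neq0.
Qed.

Lemma dens_zeros n (S : {set 'I_n}) (T : {set hyp n}) : dens R S (zeros S T) = 0.
Proof.
rewrite /dens (_ : edges S (zeros S T) = 0%N) ?mul0r //.
apply/eqP; rewrite cards_eq0; apply/eqP/setP => -[x g]; rewrite !inE /=.
by apply/negP => /and3P [Sx /andP [_ /forall_inP /(_ x Sx)/negbTE ->]].
Qed.

Definition separated_by n (alpha : R) (T : {set hyp n}) (S : {set 'I_n})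
    (T0 T1 : {set hyp n}) : Prop :=
  [/\ T0 \subset T, T1 \subset T & [disjoint T0 & T1]] /\
  [/\ alpha * n%:R <= #|S|%:R, alpha * #|T|%:R <= #|T0|%:R,
      alpha * #|T|%:R <= #|T1|%:R & alpha <= `|dens R S T0 - dens R S T1|].

Lemma separated_by_ones_zeros n (alpha : R) (T : {set hyp n}) (S : {set 'I_n}) :
  0 < alpha <= 1 -> T != set0 -> S != set0 -> alpha * n%:R <= #|S|%:R ->
  alpha * #|T|%:R <= #|ones S T|%:R -> alpha * #|T|%:R <= #|zeros S T|%:R ->
  separated_by alpha T S (ones S T) (zeros S T).
Proof.
move=> /andP [alpha_gt0 alpha_le1] T_neq0 S_neq0 S_large ones_large zeros_large.
have ones_neq0 : ones S T != set0.
  rewrite -card_gt0 -(ltr0n R); apply: lt_le_trans ones_large.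
  by rewrite mulr_gt0 // ltr0n card_gt0.
split; last by rewrite dens_ones // dens_zeros subr0 normr1.
split; try by apply/subsetP => g; rewrite inE => /andP [].
rewrite -setI_eq0; apply/eqP/setP => g; rewrite !inE.
apply/negP => /andP [/andP [_ /forall_inP g1] /andP [_ /forall_inP g0]].
by have /set0Pn [x Sx] := S_neq0; have := g0 x Sx; rewrite g1.
Qed.

Lemma tight_of_small_total_hdist n (p alpha eps : R) (T : {set hyp n}) (h : hyp n) :
  (forall g, g \in T -> in_EP p g) -> alpha <= 1 / 2 ->
  \sum_(g in T) (hdist g h)%:R < eps * n%:R * #|T|%:R / 4 -> tight p alpha eps T.
Proof.
move=> EP_T alpha_le sum_lt; set e := eps * n%:R in sum_lt *; set t := #|T| in sum_lt *.
have sum_ge0 : 0 <= \sum_(g in T) (hdist g h)%:R :> R by apply: sumr_ge0.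
have t_ge0 : 0 <= t%:R :> R by [].
have e_gt0 : 0 < e by nra.
pose Near := [set g | (hdist g h)%:R * 2 <= e].
have far_small : #|T :\: Near|%:R * 2 < t%:R :> R.
  have := markov_card (F := fun g => (hdist g h)%:R) T (e / 2) (fun g => ler0n _ _).
  have -> : [set g in T | e / 2 < (hdist g h)%:R] = T :\: Near.
    by apply/setP => g; rewrite !inE ltNge ler_pdivlMr // andbC.
  nra.
have near_large : t%:R < #|T :&: Near|%:R * 2 :> R.
  by have /(congr1 (GRing.natmul (1 : R))) := cardsID Near T; rewrite natrD; lra.
have [g0 g0_near] : exists g0, g0 \in T :&: Near.
  by apply/set0Pn; rewrite -card_gt0 -(ltr0n R); lra.
move: (g0_near); rewrite !inE => /andP [g0_T g0_h].
exists g0; split; first exact: EP_T.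
apply: le_trans (_ : #|T :&: Near|%:R <= _); first nra.
rewrite ler_nat; apply/subset_leq_card/subsetP => g; rewrite !inE => /andP [g_T g_h].
rewrite g_T /eclose -/(hdist g0 g).
apply: le_trans (_ : (hdist g0 h + hdist h g)%:R <= _).
  by rewrite ler_nat hdist_triangle.
by rewrite natrD [hdist h g]hdistC -/e; lra.
Qed.

End SeparationCriteria.

(* p S <= 4 M t < 6 alpha n t < p^2 eps n t / 4: this is where 24 comes from. *)
Lemma block_budget_lt (R : realType) (p alpha eps n t M S A B : R) :
  0 < p -> p <= 1 -> 0 < alpha -> 2 < alpha * n -> alpha < p ^+ 2 * eps / 24 ->
  0 < t -> 0 <= M <= alpha * n + 1 ->
  S <= M * (t + A + B) -> A <= t -> B * p <= 2 * t -> S < eps * n * t / 4.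
Proof.
move=> p_gt0 p_le1 alpha_gt0 alpha_n_gt2 alpha_lt t_gt0 /andP [M_ge0 M_le].
move=> S_le A_le Bp_le.
have n_gt0 : 0 < n by nra.
have eps_gt0 : 0 < eps by rewrite -(pmulr_rgt0 _ (exprn_gt0 2 p_gt0)); lra.
have pS_le : p * S <= M * (4 * t).
  have pBt : p * (t + A + B) <= 4 * t by nra.
  by have := ler_wpM2l (ltW p_gt0) S_le; have := ler_wpM2l M_ge0 pBt; nra.
have Mt_lt : M * (4 * t) < 6 * (alpha * n) * t by nra.
have alpha_nt : alpha * n * t < p ^+ 2 * eps / 24 * n * t.
  by have := mulr_gt0 n_gt0 t_gt0; nra.
have : p * S < p * (p * eps * n * t / 4) by rewrite expr2 in alpha_nt; lra.
rewrite ltr_pM2l // => S_lt; apply: lt_le_trans S_lt _.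
by have := mulr_gt0 (mulr_gt0 eps_gt0 n_gt0) t_gt0; nra.
Qed.

Section MajorityLabelling.
Variables (R : realType) (N : nat) (p alpha eps : R) (T : {set hyp N.+1}).
Local Notation n := N.+1.
Local Notation t := #|T|.

Definition block_size : nat := (Num.truncn (alpha * n%:R)).+1.
Local Notation m := block_size.

Definition balanced (b : 'I_(n %/ m)) : bool :=
  (alpha * t%:R <= #|ones (block N m b) T|%:R) &&
  (alpha * t%:R <= #|zeros (block N m b) T|%:R).

Definition majority (b : nat) : bool := #|zeros (block N m b) T|%:R < alpha * t%:R.

Hypotheses (p_gt0 : 0 < p) (p_le1 : p <= 1) (alpha_gt0 : 0 < alpha)
  (alpha_n_gt2 : 2 < alpha * n%:R) (alpha_lt : alpha < p ^+ 2 * eps / 24)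
  (EP_T : forall g, g \in T -> in_EP p g) (T_neq0 : T != set0).

Lemma block_size_gt : alpha * n%:R < m%:R.
Proof. exact: truncnS_gt. Qed.

Lemma block_size_le : m%:R <= alpha * n%:R + 1.
Proof. by rewrite -[m%:R]natr1 lerD2r truncn_le // mulr_ge0 // ltW. Qed.

Lemma card_minority_le (b : 'I_(n %/ m)) : ~~ balanced b ->
  #|[set g in T | b \in minority_blocks m majority g]|%:R <= alpha * t%:R.
Proof.
move=> unbal.
pose U := if majority b then zeros (block N m b) T else ones (block N m b) T.
apply: le_trans (_ : #|U|%:R <= _).
  rewrite ler_nat; apply/subset_leq_card/subsetP => g; rewrite !inE.
  move=> /andP [g_T /forall_inP gb]; rewrite /U.
  by case: (majority b) gb => gb; rewrite inE g_T; apply/forall_inP => x /gb; case: (g x).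
rewrite /U; case maj: (majority b); first exact: ltW.
have zeros_large : alpha * t%:R <= #|zeros (block N m b) T|%:R.
  by rewrite leNgt -/(majority b) maj.
by move: unbal; rewrite /balanced zeros_large andbT -ltNge => /ltW.
Qed.

Lemma sum_card_minority_le : (forall b, ~~ balanced b) ->
  \sum_(g in T) #|minority_blocks m majority g|%:R <= t%:R :> R.
Proof.
move=> unbal; rewrite -natr_sum double_count_card natr_sum.
apply: le_trans (_ : \sum_(b : 'I_(n %/ m)) alpha * t%:R <= _).
  by apply: ler_sum => b _; exact: card_minority_le.
rewrite sumr_const card_ord -mulr_natr.
have blocks_fit : (n %/ m)%:R * m%:R <= n%:R :> R by rewrite -natrM ler_nat leq_divM.
have K_alpha : (n %/ m)%:R * alpha <= 1.
  rewrite -(ler_pM2r (ltr0Sn _ N)) mul1r -mulrA; apply: le_trans blocks_fit.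
  exact/ler_wpM2l/ltW/block_size_gt.
have : 0 <= t%:R :> R by []; nra.
Qed.

Lemma sum_card_switches_le : \sum_(g in T) #|switches N (hyp_at g)|%:R * p <= 2 * t%:R.
Proof.
apply: le_trans (_ : \sum_(g in T) (2 : R) <= _).
  by apply: ler_sum => g gT; exact/ltW/EP_card_switches/EP_T/gT/ltW.
by rewrite sumr_const mulr_natr.
Qed.

Lemma sum_hdist_majority_lt : (forall b, ~~ balanced b) ->
  \sum_(g in T) (hdist g (block_const N m majority))%:R < eps * n%:R * t%:R / 4.
Proof.
move=> unbal.
set S : R := \sum_(g in T) _; set M : R := m%:R.
set A : R := \sum_(g in T) #|minority_blocks m majority g|%:R.
set B : R := \sum_(g in T) #|switches N (hyp_at g)|%:R.
have S_le : S <= M * (t%:R + A + B).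
  apply: le_trans (_ : \sum_(g in T) M * (1 + #|minority_blocks m majority g|%:R
                                            + #|switches N (hyp_at g)|%:R) <= _).
    apply: ler_sum => g _; rewrite -(natrD _ 1%N) -natrD -natrM ler_nat.
    by rewrite !mulnDr muln1 ![(m * _)%N]mulnC hdist_block_const.
  by rewrite -mulr_sumr !big_split /= sumr_const.
apply: (block_budget_lt p_gt0 p_le1 alpha_gt0 alpha_n_gt2 alpha_lt _ _ S_le).
- by rewrite ltr0n card_gt0.
- by rewrite ler0n block_size_le.
- exact: sum_card_minority_le.
- by rewrite /B mulr_suml; exact: sum_card_switches_le.
Qed.

End MajorityLabelling.

Theorem theorem7 (R : realType) (n : nat) (p alpha eps : R) :
  (0 < n)%N ->
  0 < p -> p < 1 ->
  0 < alpha -> alpha < 1 ->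
  0 < eps -> eps < 1 ->
  eps < 24 / p ->
  2 / n%:R < alpha -> alpha < p ^+ 2 * eps / 24 ->
  separable n p alpha eps.
Proof.
case: n => [//|N] _ p_gt0 p_lt1 alpha_gt0 alpha_lt1 _ eps_lt1 _ alpha_gt alpha_lt.
move=> T EP_T not_tight.
have [T0|T_neq0] := eqVneq T set0.
  by case: not_tight; rewrite T0; exact: tight_set0.
rewrite ltr_pdivrMr ?ltr0n // in alpha_gt.
set m := block_size N alpha.
have [/existsP [b /andP [ones_large zeros_large]] | /existsPn unbalanced] :=
  boolP [exists b : 'I_(N.+1 %/ m), balanced T b].
  have block_large : (m <= #|block N m b|)%N by exact: card_block_full.
  exists (block N m b), (ones (block N m b) T), (zeros (block N m b) T).
  apply: separated_by_ones_zeros => //.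
  - by rewrite alpha_gt0 (ltW alpha_lt1).
  - by rewrite -card_gt0 (leq_trans _ block_large).
  - by apply: le_trans (ltW (block_size_gt N alpha)) _; rewrite ler_nat.
case: not_tight.
apply: (tight_of_small_total_hdist (h := block_const N m (majority alpha T))) => //.
  by rewrite expr2 in alpha_lt; nra.
by apply: (sum_hdist_majority_lt (p := p)) => //; exact: ltW.
Qed.
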